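(* Danzer's configuration $(35_4)$ is isomorphic to an incidence sum $\mathcal C_1\oplus_I\mathcal C_2$ in which $\mathcal C_1$ is (isomorphic to) the Steiner–Plücker configuration $(20_3,15_4)$ and $\mathcal C_2$ is (isomorphic to) the Cayley–Salmon configuration $(15_4,20_3)$.
   Context: Danzer's configuration $(35_4)$: points are the 4-subsets and lines the 3-subsets of $\{1,\dots,7\}$, a point incident with a line iff the line's subset is contained in the point's subset (equivalently, the points and lines in which seven hyperplanes in general position in projective 4-space meet by fours and by threes). Steiner–Plücker configuration: three triangles $A_iB_iC_i$ ($i=1,2,3$) perspective from a common point $O$; for each pair $i<j$ the corresponding sides meet in three points lying on an axis $a_{ij}$, and the three axes meet in a point $Z$. Points: $O$, the 9 vertices, the 9 side-intersection points, $Z$ (20 points); lines: the 3 lines through $O$ and corresponding vertices, the 9 sides, the 3 axes (15 lines), with the natural incidences (4 points per line, 3 lines per point). Cayley–Salmon configuration: three triangles $A_iB_iC_i$ perspective from a common line $\ell$ (corresponding sides of all three meet in three points $X_{AB},X_{BC},X_{CA}$ of $\ell$); for each pair $i<j$ they are perspective from a centre $O_{ij}$, and the three centres lie on a line $m$. Points: 9 vertices, $X_{AB},X_{BC},X_{CA}$, $O_{12},O_{13},O_{23}$ (15 points); lines: $\ell$, 9 sides, the 9 lines joining corresponding vertices, $m$ (20 lines), with the natural incidences (3 points per line, 4 lines per point). Incidence sum: for configurations $\mathcal C_1,\mathcal C_2$ with point sets $\mathcal P_i$ and line sets $\mathcal L_i$, and $I\subseteq\mathcal P_1\times\mathcal L_2\cup\mathcal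 P_2\times\mathcal L_1$, $\mathcal C_1\oplus_I\mathcal C_2$ is the incidence structure on points $\mathcal P_1\sqcup\mathcal P_2$ and lines $\mathcal L_1\sqcup\mathcal L_2$ whose incidences are those of $\mathcal C_1$, those of $\mathcal C_2$, and the pairs in $I$. *)

From mathcomp Require Import all_boot.
Set Implicit Arguments. Unset Strict Implicit. Unset Printing Implicit Defensive.

Record incstr := IncStr {
  pt : finType;
  ln : finType;
  inc : pt -> ln -> bool }.

Definition isomorphic (C D : incstr) : Prop :=
  exists (f : pt C -> pt D) (g : ln C -> ln D),
    [/\ bijective f, bijective g &
        forall p l, inc p l = inc (f p) (g l)].

(* Incidence sum C1 (+)_I C2, where I is given as a subset of
   P1 x L2 (I12) together with a subset of P2 x L1 (I21). *)
Definition incsum (C1 C2 : incstr)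
  (I12 : pt C1 -> ln C2 -> bool) (I21 : pt C2 -> ln C1 -> bool) : incstr :=
  @IncStr (pt C1 + pt C2)%type (ln C1 + ln C2)%type
    (fun p l => match p, l with
                | inl p1, inl l1 => inc p1 l1
                | inr p2, inr l2 => inc p2 l2
                | inl p1, inr l2 => I12 p1 l2
                | inr p2, inl l1 => I21 p2 l1
                end).

Definition DPt := {A : {set 'I_7} | #|A| == 4}.
Definition DLn := {A : {set 'I_7} | #|A| == 3}.
Definition Danzer : incstr :=
  @IncStr DPt DLn (fun p l => val l \subset val p).

(* ---------- Steiner--Pluecker configuration (20_3, 15_4) ----------
   Triangles are indexed by i : 'I_3, vertices of a triangle by X : 'I_3
   (A,B,C); side k of a triangle is the side opposite to vertex k.
   A pair {i<j} of triangles is indexed by the remaining index m.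
   Points:  inl (inl (inl tt))      = O
            inl (inl (inr (i,X)))   = vertex X of triangle i
            inl (inr (m,k))         = common point of the sides k of the two
                                      triangles of the pair m
            inr tt                  = Z
   Lines:   inl (inl X)             = line through O and the vertices X
            inl (inr (i,k))         = side k of triangle i
            inr m                   = axis of the pair m *)
Definition SPPt := ((unit + ('I_3 * 'I_3)) + ('I_3 * 'I_3) + unit)%type.
Definition SPLn := (('I_3 + ('I_3 * 'I_3)) + 'I_3)%type.
Definition sp_inc (p : SPPt) (l : SPLn) : bool :=
  match p, l with
  | inl (inl (inl _)), inl (inl _) => true
  | inl (inl (inr (i, X))), inl (inl X') => X == X'
  | inl (inl (inr (i, X))), inl (inr (i', k)) => (i == i') && (X != k)
  | inl (inr (m, k)), inl (inr (i, k')) => (k == k') && (i != m)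
  | inl (inr (m, k)), inr m' => m == m'
  | inr _, inr _ => true
  | _, _ => false
  end.
Definition SteinerPlucker : incstr := @IncStr SPPt SPLn sp_inc.

(* ---------- Cayley--Salmon configuration (15_4, 20_3) ----------
   Points:  inl (inl (i,X))   = vertex X of triangle i
            inl (inr k)       = point X_k on l where the sides k meet
            inr m             = centre O_m of perspectivity of the pair m
   Lines:   inl (inl tt)      = the line l
            inl (inr (i,k))   = side k of triangle i
            inr (inl (m,X))   = line joining the vertices X of the pair m
            inr (inr tt)      = the line m through the three centres *)
Definition CSPt := ((('I_3 * 'I_3) + 'I_3) + 'I_3)%type.
Definition CSLn := ((unit + ('I_3 * 'I_3)) + (('I_3 * 'I_3) + unit))%type.
Definition cs_inc (p : CSPt) (l : CSLn) : bool :=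
  match p, l with
  | inl (inl (i, X)), inl (inr (i', k)) => (i == i') && (X != k)
  | inl (inl (i, X)), inr (inl (m, X')) => (X == X') && (i != m)
  | inl (inr k), inl (inl _) => true
  | inl (inr k), inl (inr (_, k')) => k == k'
  | inr m, inr (inl (m', _)) => m == m'
  | inr _, inr (inr _) => true
  | _, _ => false
  end.
Definition CayleySalmon : incstr := @IncStr CSPt CSLn cs_inc.

From mathcomp Require Import all_boot.

Set Implicit Arguments.
Unset Strict Implicit.
Unset Printing Implicit Defensive.

(* Name the seven elements 0,1,2 after the vertex letters A,B,C, 3,4,5 after
   the three triangles, and keep 6 as an extra symbol.  Every element of the
   Steiner-Pluecker configuration is labelled by a subset containing 6 and
   every element of the Cayley-Salmon configuration by a subset avoiding 6
   (e.g. vertex X of triangle i is {6, 3+i} plus the two other letters in the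
   first, and the four labels other than X and 3+i in the second).  These
   labellings are bijections onto the 4-subsets and 3-subsets of the seven
   elements under which both configurations' incidences become inclusion, so
   Danzer's configuration is their incidence sum with inclusion as the cross
   incidence.  All of this is a finite check, done by evaluation on
   characteristic vectors. *)

Lemma isomorphic_refl (C : incstr) : isomorphic C C.
Proof. by exists id, id; split => //; exists id. Qed.

Lemma isomorphic_sym (C D : incstr) : isomorphic C D -> isomorphic D C.
Proof.
case=> f [g] [[f' fK f'K] [g' gK g'K] inc_fg].
exists f', g'; split; [by exists f | by exists g |].
by move=> p l; rewrite -{1}[p]f'K -{1}[l]g'K inc_fg.
Qed.

Lemma inj_isomorphic (C D : incstr) (f : pt C -> pt D) (g : ln C -> ln D) :
    injective f -> injective g -> #|pt D| <= #|pt C| -> #|ln D| <= #|ln C| ->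
    (forall p l, inc p l = inc (f p) (g l)) -> isomorphic C D.
Proof.
move=> f_inj g_inj cardP cardL inc_fg.
by exists f, g; split; try exact: inj_card_bij.
Qed.

Lemma card_ksubsets (T : finType) k :
  #|{: {A : {set T} | #|A| == k}}| = 'C(#|T|, k).
Proof. by rewrite card_sig -card_draws; apply: eq_card => A; rewrite !inE. Qed.

Lemma forall_of_all (T : eqType) (s : seq T) (P : pred T) :
  (forall x, x \in s) -> all P s -> forall x, P x.
Proof. by move=> s_full /allP sP x; apply: sP. Qed.

Lemma forall2_of_all (T U : eqType) (s : seq T) (t : seq U)
    (P : T -> U -> bool) :
  (forall x, x \in s) -> (forall y, y \in t) ->
  all (fun x => all (P x) t) s -> forall x y, P x y.
Proof.
move=> s_full t_full /allP sP x y.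
by apply/(allP (sP x (s_full x)))/t_full.
Qed.

Section OrdSet.
Variable n : nat.

Definition ordset (s : seq nat) : {set 'I_n} := [set i : 'I_n | val i \in s].
Definition charvec (s : seq nat) : seq bool := [seq j \in s | j <- iota 0 n].

Lemma charvecE s : charvec s = [seq i \in ordset s | i <- enum 'I_n].
Proof.
by rewrite /charvec -val_enum_ord -map_comp; apply: eq_map => i; rewrite /= inE.
Qed.

Lemma card_ordset s : #|ordset s| = count id (charvec s).
Proof. by rewrite charvecE count_map cardE size_filter -enumT. Qed.

Lemma subset_ordset s t :
  (ordset s \subset ordset t) = all2 implb (charvec s) (charvec t).
Proof.
rewrite !charvecE all2E !size_map eqxx zip_map all_map.
apply/subsetP/allP => [sub_st i _ | sub_st i i_s] /=; first exact/implyP/sub_st.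
by have /implyP := sub_st i (mem_enum _ i); apply.
Qed.

Lemma charvec_ordset_eq s t : ordset s = ordset t -> charvec s = charvec t.
Proof. by rewrite !charvecE => ->. Qed.

End OrdSet.

Definition ord3 : seq 'I_3 :=
  [:: @Ordinal 3 0 isT; @Ordinal 3 1 isT; @Ordinal 3 2 isT].

Lemma mem_ord3 i : i \in ord3.
Proof. by case: i => [[|[|[|]]]]. Qed.

Definition ord3_pairs : seq ('I_3 * 'I_3) :=
  [seq (i, j) | i <- ord3, j <- ord3].

Lemma mem_ord3_pairs q : q \in ord3_pairs.
Proof. by case: q => i j; rewrite allpairs_f ?mem_ord3. Qed.

Definition sum_seq (T U : Type) (s : seq T) (t : seq U) : seq (T + U) :=
  map inl s ++ map inr t.

Lemma mem_sum_seq (T U : eqType) (s : seq T) (t : seq U) :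
  (forall x, x \in s) -> (forall y, y \in t) -> forall z, z \in sum_seq s t.
Proof. by move=> s_full t_full [x|y]; rewrite mem_cat map_f ?orbT. Qed.

Definition sp_pts : seq SPPt :=
  [:: inl (inl (inl tt)); inr tt] ++
  [seq inl (inl (inr q)) | q <- ord3_pairs] ++
  [seq inl (inr q) | q <- ord3_pairs].
Definition sp_lns : seq SPLn :=
  [seq inl (inl X) | X <- ord3] ++ [seq inl (inr q) | q <- ord3_pairs] ++
  [seq inr m | m <- ord3].
Definition cs_pts : seq CSPt :=
  [seq inl (inl q) | q <- ord3_pairs] ++ [seq inl (inr k) | k <- ord3] ++
  [seq inr m | m <- ord3].
Definition cs_lns : seq CSLn :=
  [:: inl (inl tt); inr (inr tt)] ++
  [seq inl (inr q) | q <- ord3_pairs] ++ [seq inr (inl q) | q <- ord3_pairs].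

Lemma mem_sp_pts p : p \in sp_pts.
Proof.
by case: p => [[[[]|q]|q]|[]];
  rewrite !mem_cat ?map_f ?mem_ord3_pairs ?orbT.
Qed.

Lemma mem_sp_lns l : l \in sp_lns.
Proof.
by case: l => [[X|q]|m];
  rewrite !mem_cat ?map_f ?mem_ord3 ?mem_ord3_pairs ?orbT.
Qed.

Lemma mem_cs_pts p : p \in cs_pts.
Proof.
by case: p => [[q|k]|m];
  rewrite !mem_cat ?map_f ?mem_ord3 ?mem_ord3_pairs ?orbT.
Qed.

Lemma mem_cs_lns l : l \in cs_lns.
Proof.
by case: l => [[[]|q]|[q|[]]];
  rewrite !mem_cat ?map_f ?mem_ord3_pairs ?orbT.
Qed.

Definition vtx_labels : seq nat := [:: 0; 1; 2].
Definition tri_labels : seq nat := [:: 3; 4; 5].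

Definition sp_pt_label (p : SPPt) : seq nat :=
  match p with
  | inl (inl (inl _)) => 6 :: vtx_labels
  | inl (inl (inr (i, X))) => [:: 6, 3 + i & rem (nat_of_ord X) vtx_labels]
  | inl (inr (m, k)) => [:: 6, nat_of_ord k & rem (3 + m) tri_labels]
  | inr _ => 6 :: tri_labels
  end.

Definition sp_ln_label (l : SPLn) : seq nat :=
  match l with
  | inl (inl X) => 6 :: rem (nat_of_ord X) vtx_labels
  | inl (inr (i, k)) => [:: 6; 3 + i; nat_of_ord k]
  | inr m => 6 :: rem (3 + m) tri_labels
  end.

Definition cs_pt_label (p : CSPt) : seq nat :=
  match p with
  | inl (inl (i, X)) => rem (nat_of_ord X) vtx_labels ++ rem (3 + i) tri_labels
  | inl (inr k) => nat_of_ord k :: tri_labels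
  | inr m => 3 + m :: vtx_labels
  end.

Definition cs_ln_label (l : CSLn) : seq nat :=
  match l with
  | inl (inl _) => tri_labels
  | inl (inr (i, k)) => nat_of_ord k :: rem (3 + i) tri_labels
  | inr (inl (m, X)) => 3 + m :: rem (nat_of_ord X) vtx_labels
  | inr (inr _) => vtx_labels
  end.

Lemma sp_inc_label p l :
  sp_inc p l = (ordset 7 (sp_ln_label l) \subset ordset 7 (sp_pt_label p)).
Proof.
rewrite subset_ordset; apply/eqP; move: p l.
by apply: (forall2_of_all mem_sp_pts mem_sp_lns); vm_compute.
Qed.

Lemma cs_inc_label p l :
  cs_inc p l = (ordset 7 (cs_ln_label l) \subset ordset 7 (cs_pt_label p)).
Proof.
rewrite subset_ordset; apply/eqP; move: p l.
by apply: (forall2_of_all mem_cs_pts mem_cs_lns); vm_compute.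
Qed.

Definition pt_label (x : SPPt + CSPt) : seq nat :=
  match x with inl p => sp_pt_label p | inr p => cs_pt_label p end.
Definition ln_label (y : SPLn + CSLn) : seq nat :=
  match y with inl l => sp_ln_label l | inr l => cs_ln_label l end.

Definition sum_pts := sum_seq sp_pts cs_pts.
Definition sum_lns := sum_seq sp_lns cs_lns.

Lemma mem_sum_pts x : x \in sum_pts.
Proof. exact: mem_sum_seq mem_sp_pts mem_cs_pts x. Qed.

Lemma mem_sum_lns y : y \in sum_lns.
Proof. exact: mem_sum_seq mem_sp_lns mem_cs_lns y. Qed.

Lemma card_pt_label x : #|ordset 7 (pt_label x)| == 4.
Proof.
rewrite card_ordset; move: x.
by apply: (forall_of_all mem_sum_pts); vm_compute.
Qed.

Lemma card_ln_label y : #|ordset 7 (ln_label y)| == 3.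
Proof.
rewrite card_ordset; move: y.
by apply: (forall_of_all mem_sum_lns); vm_compute.
Qed.

Lemma pt_label_inj : injective (fun x => ordset 7 (pt_label x)).
Proof.
move=> x y /charvec_ordset_eq/eqP eq_xy; apply/eqP; move: eq_xy; apply/implyP.
move: x y.
by apply: (forall2_of_all mem_sum_pts mem_sum_pts); vm_compute.
Qed.

Lemma ln_label_inj : injective (fun y => ordset 7 (ln_label y)).
Proof.
move=> x y /charvec_ordset_eq/eqP eq_xy; apply/eqP; move: eq_xy; apply/implyP.
move: x y.
by apply: (forall2_of_all mem_sum_lns mem_sum_lns); vm_compute.
Qed.

Definition sp_cs_inc (p : pt SteinerPlucker) (l : ln CayleySalmon) : bool :=
  ordset 7 (cs_ln_label l) \subset ordset 7 (sp_pt_label p).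
Definition cs_sp_inc (p : pt CayleySalmon) (l : ln SteinerPlucker) : bool :=
  ordset 7 (sp_ln_label l) \subset ordset 7 (cs_pt_label p).

Lemma incsum_inc_label x y :
  @inc (incsum sp_cs_inc cs_sp_inc) x y =
  (ordset 7 (ln_label y) \subset ordset 7 (pt_label x)).
Proof.
by case: x y => p [] l;
  rewrite /= ?sp_inc_label ?cs_inc_label.
Qed.

Definition danzer_pt (x : SPPt + CSPt) : DPt :=
  exist _ (ordset 7 (pt_label x)) (card_pt_label x).
Definition danzer_ln (y : SPLn + CSLn) : DLn :=
  exist _ (ordset 7 (ln_label y)) (card_ln_label y).

Theorem theorem4p6 :
  exists (C1 C2 : incstr)
         (I12 : pt C1 -> ln C2 -> bool) (I21 : pt C2 -> ln C1 -> bool),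
    [/\ isomorphic C1 SteinerPlucker,
        isomorphic C2 CayleySalmon &
        isomorphic Danzer (incsum I12 I21)].
Proof.
exists SteinerPlucker, CayleySalmon, sp_cs_inc, cs_sp_inc.
split; [exact: isomorphic_refl | exact: isomorphic_refl |].
apply: isomorphic_sym.
apply: (@inj_isomorphic (incsum sp_cs_inc cs_sp_inc) Danzer
                        danzer_pt danzer_ln).
- by move=> x y /(congr1 val)/pt_label_inj.
- by move=> x y /(congr1 val)/ln_label_inj.
- by rewrite card_ksubsets /= !card_sum !card_prod !card_unit !card_ord.
- by rewrite card_ksubsets /= !card_sum !card_prod !card_unit !card_ord.
- exact: incsum_inc_label.
Qed.
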